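(* Let $L$ be a finite-dimensional Lie algebra over a field $F$. The relation ''is $L$-connected to'' is an equivalence relation on the set of chief factors of $L$.
   Context: A chief factor of $L$ is a quotient $A/B$ of ideals $B\subsetneq A$ with no ideal of $L$ strictly between them; two chief factors are $L$-isomorphic if they are isomorphic as $L$-modules. The core $U_L$ of a subalgebra is the largest ideal of $L$ contained in it; $L$ is primitive if it has a maximal subalgebra with zero core, and a primitive Lie algebra is of type 3 if it has precisely two distinct minimal ideals, both non-abelian. Two chief factors $A_1/B_1$, $A_2/B_2$ of $L$ are $L$-connected if either they are $L$-isomorphic, or there is an ideal $N$ of $L$ such that $L/N$ is primitive of type 3 and its two minimal ideals $E_1/N$, $E_2/N$ satisfy $E_1/N \cong_L A_1/B_1$ and $E_2/N \cong_L A_2/B_2$ (as $L$-modules). *)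

(* finite-dimensional Lie algebras over a field, encoded as a
   finite-dimensional vector space (vectType F) with a Lie bracket. *)
From HB Require Import structures.
From mathcomp Require Import all_boot all_order all_algebra.
Set Implicit Arguments. Unset Strict Implicit. Unset Printing Implicit Defensive.
Import GRing.Theory.
Local Open Scope ring_scope.


Section Lie.
Variables (F : fieldType) (L : vectType F) (br : L -> L -> L).

Definition lie_bracket : Prop :=
  [/\ (forall (a : F) (x y z : L), br (a *: x + y) z = a *: br x z + br y z),
      (forall (a : F) (x y z : L), br z (a *: x + y) = a *: br z x + br z y),
      (forall x : L, br x x = 0) &
      (forall x y z : L, br x (br y z) + br y (br z x) + br z (br x y) = 0)].

Definition is_ideal (I : {vspace L}) : Prop :=
  forall x y : L, y \in I -> br x y \in I.

Definition is_subalg (S : {vspace L}) : Prop :=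
  forall x y : L, x \in S -> y \in S -> br x y \in S.

Definition chief_factor (A B : {vspace L}) : Prop :=
  [/\ is_ideal A, is_ideal B, (B <= A)%VS, A != B &
      forall C, is_ideal C -> (B <= C)%VS -> (C <= A)%VS -> C = B \/ C = A].

(* A1/B1 and A2/B2 are isomorphic as L-modules (L acting by the bracket).
   Every linear map A1/B1 -> A2/B2 lifts to a linear endomorphism f of L;
   f induces a well-defined, injective, surjective, L-equivariant map. *)
Definition L_iso (A1 B1 A2 B2 : {vspace L}) : Prop :=
  exists f : 'End(L),
    [/\ (forall a, a \in A1 -> f a \in A2),
        (forall b, b \in B1 -> f b \in B2),
        (forall a, a \in A1 -> f a \in B2 -> a \in B1),
        (forall c, c \in A2 -> exists2 a, a \in A1 & c - f a \in B2) &
        (forall x a, a \in A1 -> f (br x a) - br x (f a) \in B2)].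

Definition is_core (U N : {vspace L}) : Prop :=
  [/\ is_ideal N, (N <= U)%VS &
      forall I, is_ideal I -> (I <= U)%VS -> (I <= N)%VS].

Definition max_subalg (M : {vspace L}) : Prop :=
  [/\ is_subalg M, M != fullv &
      forall S, is_subalg S -> (M <= S)%VS -> S = M \/ S = fullv].

(* E/N is a minimal ideal of L/N. *)
Definition minimal_over (N E : {vspace L}) : Prop :=
  [/\ is_ideal E, (N <= E)%VS, E != N &
      forall C, is_ideal C -> (N <= C)%VS -> (C <= E)%VS -> C = N \/ C = E].

Definition nonabelian_over (N E : {vspace L}) : Prop :=
  exists x y, [/\ x \in E, y \in E & br x y \notin N].

(* L/N is primitive of type 3 with minimal ideals E1/N, E2/N (via the
   correspondence theorem, all expressed inside L):
   - L/N has a maximal subalgebra with zero core: a maximal subalgebra M of L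
     containing N whose core in L is N;
   - L/N has precisely two distinct minimal ideals E1/N and E2/N;
   - both are non-abelian. *)
Definition primitive_type3 (N E1 E2 : {vspace L}) : Prop :=
  [/\ is_ideal N,
      (exists M, [/\ max_subalg M, (N <= M)%VS & is_core M N]),
      E1 != E2,
      minimal_over N E1 /\ minimal_over N E2 &
      (forall E, minimal_over N E -> E = E1 \/ E = E2)] /\
  (nonabelian_over N E1 /\ nonabelian_over N E2).

Definition L_connected (A1 B1 A2 B2 : {vspace L}) : Prop :=
  L_iso A1 B1 A2 B2 \/
  exists N E1 E2, [/\ primitive_type3 N E1 E2,
                      L_iso E1 N A1 B1 & L_iso E2 N A2 B2].

End Lie.

From HB Require Import structures.
From mathcomp Require Import all_boot all_order all_algebra.
Set Implicit Arguments. Unset Strict Implicit. Unset Printing Implicit Defensive.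
Import GRing.Theory.
Local Open Scope ring_scope.

(* For transitivity, the interesting case chains two
   primitive quotients of type 3: L/N with minimal ideals E1/N, E2/N and L/N'
   with minimal ideals E1'/N', E2'/N', where E2/N and E1'/N' are L-isomorphic.
   In such a quotient each minimal ideal is the centraliser of the other, and
   L-isomorphic factors have the same centraliser, so E2' = E1.  If N = N' we
   are done.  Otherwise N + N' = E1, and L/(E1' :&: E2) is again primitive of
   type 3, with minimal ideals E1'/(E1' :&: E2) ~ E1/N and
   E2/(E1' :&: E2) ~ E1/N' by the second isomorphism theorem: this connects
   E1/N to E2'/N'. *)


Lemma capv_addl_modular (K : fieldType) (vT : vectType K) (U V W : {vspace vT}) :
  (U <= W)%VS -> (W :&: (U + V) = U + W :&: V)%VS.
Proof.
move=> sUW; apply/eqP; rewrite eqEsubv; apply/andP; split; last first.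
  rewrite subv_cap !subv_add sUW capvSl addvSl /=.
  exact: subv_trans (capvSr _ _) (addvSr _ _).
apply/subvP=> w /memv_capP[wW /memv_addP[u uU [v vV def_w]]].
have vW : v \in W by rewrite -[v](addKr u) -def_w memvD // memvN (subvP sUW).
by rewrite def_w memv_add // memv_cap vW.
Qed.

Lemma memvB_trans (K : fieldType) (vT : vectType K) (V : {vspace vT}) (a b c : vT) :
  a - b \in V -> b - c \in V -> a - c \in V.
Proof. by move=> abV bcV; rewrite -[a](subrK b) -addrA memvD. Qed.

Lemma linear_lift_mod (K : fieldType) (vT : vectType K) (f : 'End(vT)) (A1 A2 B2 : {vspace vT}) :
  (forall c, c \in A2 -> exists2 a, a \in A1 & c - f a \in B2) ->
  exists g : 'End(vT), [/\ forall c, g c \in A1, forall b, b \in B2 -> g b = 0 &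
                          forall c, c \in A2 -> f (g c) - c \in B2].
Proof.
move=> f_onto.
(* g projects along B2 onto a complement U of B2 in f(A1) + B2, then pulls back
   through f into A1. *)
pose h := (f \o projv A1)%VF; pose U := ((f @: A1) :\: B2)%VS; pose pi := daddv_pi U B2.
have UB : (U :&: B2 = 0)%VS by apply: capv_diff.
have pi_B b : b \in B2 -> pi b = 0.
  move=> bB; have := daddv_pi_add UB (subvP (addvSr U B2) _ bB).
  by rewrite (daddv_pi_id (etrans (capvC B2 U) UB) bB) => /eqP; rewrite -subr_eq0 addrK => /eqP.
exists (projv A1 \o h^-1 \o pi)%VF; split=> [c | b bB | c cA].
- by rewrite !comp_lfunE memv_proj.
- by rewrite !comp_lfunE pi_B // !linear0.
have [a aA ca] := f_onto c cA.
have cUB : c \in (U + B2)%VS.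
  by rewrite addv_diff -[c](subrK (f a)) addrC memv_add ?memv_img.
have hpi : h ((h^-1)%VF (pi c)) = pi c.
  apply: limg_lfunVK; rewrite limg_comp limg_proj.
  exact: subvP (diffvSl _ _) _ (memv_pi _ _ _).
rewrite !comp_lfunE -[X in _ - X](daddv_pi_add UB cUB) -/pi.
by move: hpi; rewrite comp_lfunE => ->; rewrite opprD addrA subrr add0r memvN memv_pi.
Qed.

Section LieAlgebra.
Variables (F : fieldType) (L : vectType F) (br : L -> L -> L).
Hypothesis hL : lie_bracket br.

Fact br_linearl a : linear (br^~ a). Proof. by move=> k u v; case: hL. Qed.
Fact br_linearr a : linear (br a). Proof. by move=> k u v; case: hL. Qed.

Definition adr (a : L) : {linear L -> L} :=
  HB.pack (br^~ a) (GRing.isLinear.Build F L L *:%R (br^~ a) (br_linearl a)).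
Definition adl (a : L) : {linear L -> L} :=
  HB.pack (br a) (GRing.isLinear.Build F L L *:%R (br a) (br_linearr a)).

Lemma brDl x y z : br (x + y) z = br x z + br y z. Proof. exact: raddfD (adr z) x y. Qed.
Lemma brDr x y z : br z (x + y) = br z x + br z y. Proof. exact: raddfD (adl z) x y. Qed.
Lemma brBr x y z : br z (x - y) = br z x - br z y. Proof. exact: raddfB (adl z) x y. Qed.

Lemma br_anti x y : br x y = - br y x.
Proof.
have br_diag z : br z z = 0 by case: hL.
apply/eqP; rewrite -subr_eq0 opprK -(br_diag (x + y)) brDl !brDr.
by rewrite !br_diag add0r addr0.
Qed.

Lemma br_jacobi x y z : br (br x y) z = br x (br y z) + br y (br z x).
Proof.
have [_ _ _ jacobi] := hL.
by rewrite br_anti; apply/eqP; rewrite eq_sym -addr_eq0 jacobi.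
Qed.

Lemma ideal_brl (I : {vspace L}) x y : is_ideal br I -> y \in I -> br y x \in I.
Proof. by move=> idI yI; rewrite br_anti memvN idI. Qed.

Lemma is_ideal_cap (I J : {vspace L}) :
  is_ideal br I -> is_ideal br J -> is_ideal br (I :&: J).
Proof. by move=> idI idJ x y /memv_capP[yI yJ]; rewrite memv_cap idI ?idJ. Qed.

Lemma is_ideal_add (I J : {vspace L}) :
  is_ideal br I -> is_ideal br J -> is_ideal br (I + J).
Proof.
by move=> idI idJ x _ /memv_addP[u uI [v vJ ->]]; rewrite brDr memv_add ?idI ?idJ.
Qed.

Lemma is_subalg_cap (S T : {vspace L}) :
  is_subalg br S -> is_subalg br T -> is_subalg br (S :&: T).
Proof.
move=> sS sT x y /memv_capP[xS xT] /memv_capP[yS yT].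
by rewrite memv_cap sS ?sT.
Qed.

Lemma is_subalg_add_ideal (S I : {vspace L}) :
  is_subalg br S -> is_ideal br I -> is_subalg br (S + I).
Proof.
move=> sS idI _ _ /memv_addP[s1 s1S [i1 i1I ->]] /memv_addP[s2 s2S [i2 i2I ->]].
rewrite brDl !brDr -addrA; apply: memv_add; first exact: sS.
by apply: memvD; [exact: idI | apply: memvD; [exact: ideal_brl | exact: idI]].
Qed.

Definition centv (A N : {vspace L}) : {vspace L} :=
  (\bigcap_(i < \dim A) (linfun (adr (vbasis A)`_i) @^-1: N))%VS.

Lemma memv_centv (A N : {vspace L}) x :
  reflect (forall a, a \in A -> br x a \in N) (x \in centv A N).
Proof.
rewrite memvE; apply: (iffP subv_bigcapP) => [x_cent a aA | x_cent i _].
  rewrite (coord_vbasis aA) -[br x _]/(adl x _) linear_sum memv_suml // => i _.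
  rewrite linearZ memvZ //=.
  by have := x_cent i isT; rewrite -memvE -memv_preim lfunE.
rewrite -memvE -memv_preim lfunE x_cent //=.
by apply: vbasis_mem; apply: mem_nth; rewrite size_tuple.
Qed.

Lemma L_iso_refl (A B : {vspace L}) : L_iso br A B A B.
Proof.
exists \1%VF; split=> [a | b | a _ | c cA | x a _]; rewrite ?id_lfunE //.
  by exists c => //; rewrite id_lfunE subrr mem0v.
by rewrite subrr mem0v.
Qed.

Lemma L_iso_trans (A1 B1 A2 B2 A3 B3 : {vspace L}) :
  L_iso br A1 B1 A2 B2 -> L_iso br A2 B2 A3 B3 -> L_iso br A1 B1 A3 B3.
Proof.
move=> [f [fA fB f_inj f_onto f_equi]] [g [gA gB g_inj g_onto g_equi]].
exists (g \o f)%VF; split=> [a aA | b bB | a aA | c cA | x a aA]; rewrite ?comp_lfunE.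
- exact/gA/fA.
- exact/gB/fB.
- by move=> gfaB; apply/f_inj/g_inj; rewrite ?fA.
- have [a2 a2A ca2] := g_onto c cA; have [a1 a1A a2a1] := f_onto a2 a2A.
  exists a1; rewrite // comp_lfunE.
  by apply: memvB_trans ca2 _; rewrite -linearB gB.
apply: (memvB_trans (b := g (br x (f a)))); last by rewrite g_equi ?fA.
by rewrite -linearB gB ?f_equi.
Qed.

Lemma L_iso_sym (A1 B1 A2 B2 : {vspace L}) :
  is_ideal br A1 -> is_ideal br A2 -> is_ideal br B2 ->
  L_iso br A1 B1 A2 B2 -> L_iso br A2 B2 A1 B1.
Proof.
move=> idA1 idA2 idB2 [f [fA fB f_inj f_onto f_equi]].
have [g [gA gB fgK]] := linear_lift_mod f_onto.
have fgK' c : c \in A2 -> c - f (g c) \in B2 by move/fgK; rewrite -memvN opprB.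
exists g; split=> [c _ | b bB | c cA gcB | a aA | x c cA].
- exact: gA.
- by rewrite gB ?mem0v.
- by rewrite -[c](subrK (f (g c))) memvD ?fgK' ?fB.
- exists (f a); first exact: fA.
  by apply: f_inj; rewrite ?memvB ?gA // linearB -opprB memvN fgK ?fA.
apply: f_inj; first by rewrite memvB ?idA1 ?gA.
rewrite linearB; apply: (memvB_trans (b := br x c)); first by rewrite fgK ?idA2.
apply: (memvB_trans (b := br x (f (g c)))); first by rewrite -brBr idB2 ?fgK'.
by rewrite -opprB memvN f_equi.
Qed.

Lemma L_iso_second (A B C : {vspace L}) :
  (C <= A)%VS -> (A <= B + C)%VS -> L_iso br C (B :&: C) A B.
Proof.
move=> sCA sABC; exists \1%VF; split=> [c cC | b | c cC | a aA | x c _].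
- by rewrite id_lfunE (subvP sCA).
- by rewrite id_lfunE => /memv_capP[].
- by rewrite id_lfunE memv_cap cC andbT.
- have /memv_addP[b bB [c cC ->]] := subvP sABC a aA.
  by exists c => //; rewrite id_lfunE addrK.
by rewrite !id_lfunE subrr mem0v.
Qed.

Lemma L_iso_centv (A1 B1 A2 B2 : {vspace L}) :
  is_ideal br A1 -> is_ideal br B2 -> L_iso br A1 B1 A2 B2 ->
  centv A1 B1 = centv A2 B2.
Proof.
move=> idA1 idB2 [f [fA fB f_inj f_onto f_equi]].
apply/vspaceP => x; apply/memv_centv/memv_centv => x_cent.
  move=> c cA; have [a aA ca] := f_onto c cA.
  rewrite -[c](subrK (f a)) brDr; apply: memvD; first exact: idB2.
  by rewrite -[br x _](subrK (f (br x a))) memvD ?fB ?x_cent // -opprB memvN f_equi.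
move=> a aA; apply: f_inj; first exact: idA1.
by rewrite -[f _](subrK (br x (f a))) memvD ?f_equi ?x_cent ?fA.
Qed.

Lemma L_iso_minimal_over (A1 B1 A2 B2 : {vspace L}) :
  is_ideal br A2 -> (B2 <= A2)%VS -> L_iso br A1 B1 A2 B2 ->
  minimal_over br B1 A1 -> minimal_over br B2 A2.
Proof.
move=> idA2 sB2A2 [f [fA fB f_inj f_onto f_equi]] [idA1 sB1A1 neqA1 minA1].
split=> // [|C idC sB2C sCA2].
  apply: contraNneq neqA1 => eqA2; rewrite eqEsubv sB1A1 andbT.
  by apply/subvP => a aA; apply: f_inj; rewrite // -eqA2 fA.
pose C1 := (A1 :&: f @^-1: C)%VS.
have memC1 a : a \in A1 -> f a \in C -> a \in C1 by rewrite memv_cap memv_preim => ->.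
have idC1 : is_ideal br C1.
  move=> x a /memv_capP[aA]; rewrite -memv_preim => faC; apply: memC1; first exact: idA1.
  by rewrite -[f _](subrK (br x (f a))) memvD ?idC // (subvP sB2C) ?f_equi.
have sB1C1 : (B1 <= C1)%VS.
  by apply/subvP => b bB; rewrite memC1 ?(subvP sB1A1) ?(subvP sB2C) ?fB.
have [C1B1 | C1A1] := minA1 C1 idC1 sB1C1 (capvSl _ _); [left | right].
  apply/eqP; rewrite eqEsubv sB2C andbT; apply/subvP => c cC.
  have [a aA ca] := f_onto c (subvP sCA2 c cC).
  have faC : f a \in C by rewrite -[f a](subKr c) memvB // (subvP sB2C).
  by rewrite -[c](subrK (f a)) memvD ?fB // -C1B1 memC1.
apply/eqP; rewrite eqEsubv sCA2; apply/subvP => c cA.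
have [a aA ca] := f_onto c cA.
have : a \in C1 by rewrite C1A1.
case/memv_capP=> _; rewrite -memv_preim => faC.
by rewrite -[c](subrK (f a)) memvD // (subvP sB2C).
Qed.

Lemma centv_ideal (N E : {vspace L}) : is_ideal br N -> (N <= centv E N)%VS.
Proof. by move=> idN; apply/subvP => y yN; apply/memv_centv => a _; apply: ideal_brl. Qed.

Lemma centv_cap (E1 E2 : {vspace L}) :
  is_ideal br E1 -> is_ideal br E2 -> (E2 <= centv E1 (E1 :&: E2))%VS.
Proof.
move=> idE1 idE2; apply/subvP => x xE2; apply/memv_centv => a aE1.
by rewrite memv_cap idE1 // ideal_brl.
Qed.

Lemma nonabelian_over_centv (N E : {vspace L}) :
  ~~ (E <= centv E N)%VS -> nonabelian_over br N E.
Proof.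
case/subvPn=> x xE x_ncent.
have /existsP[i nxi] : [exists i : 'I_(\dim E), br x (vbasis E)`_i \notin N].
  apply: contraR x_ncent => /existsPn x_cent.
  rewrite memvE; apply/subv_bigcapP => i _.
  by rewrite -memvE -memv_preim lfunE /= (negbNE (x_cent i)).
exists x, (vbasis E)`_i; split=> //.
by apply: vbasis_mem; apply: mem_nth; rewrite size_tuple.
Qed.

Lemma minimal_over_cap (N E1 E2 : {vspace L}) :
  minimal_over br N E1 -> minimal_over br N E2 -> E1 != E2 -> (E1 :&: E2)%VS = N.
Proof.
move=> [idE1 sNE1 neqE1 minE1] [idE2 sNE2 _ minE2] neqE.
have sNcap : (N <= E1 :&: E2)%VS by rewrite subv_cap sNE1.
case: (minE1 _ (is_ideal_cap idE1 idE2) sNcap (capvSl _ _)) => // /capv_idPl sE12.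
by case: (minE2 _ idE1 sNE1 sE12) => eqE; rewrite eqE eqxx in neqE1 neqE.
Qed.

Lemma minimal_over_addv (N N' E : {vspace L}) :
  is_ideal br N -> is_ideal br N' -> minimal_over br N E -> minimal_over br N' E ->
  N != N' -> (N + N')%VS = E.
Proof.
move=> idN idN' [_ sNE neqE minE] [_ sN'E _ minE'] neqN.
have sNN'E : (N + N' <= E)%VS by rewrite subv_add sNE.
case: (minE _ (is_ideal_add idN idN') (addvSl _ _) sNN'E) => // /addv_idPl sN'N.
by case: (minE' _ idN sN'N sNE) => eqN; rewrite eqN eqxx in neqN neqE.
Qed.

Lemma max_core_suppl (N E M : {vspace L}) :
  minimal_over br N E -> max_subalg br M -> is_core br M N -> (M + E)%VS = fullv.
Proof.
move=> [idE sNE neqE _] [sM _ maxS] [_ _ core].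
case: (maxS _ (is_subalg_add_ideal sM idE) (addvSl _ _)) => // /addv_idPl sEM.
by case/negP: neqE; rewrite eqEsubv core.
Qed.

Section MaximalSubalgebraWithTrivialCore.
Variables N E1 E2 M : {vspace L}.
Hypotheses (minE1 : minimal_over br N E1) (minE2 : minimal_over br N E2).
Hypotheses (neqE : E1 != E2) (maxM : max_subalg br M) (coreM : is_core br M N).

Lemma max_core_capM : (M :&: E1 <= N)%VS.
Proof.
have [idE1 sNE1 _ _] := minE1; have [idE2 _ _ _] := minE2.
have [sM _ _] := maxM; have [_ sNM core] := coreM.
have capE := minimal_over_cap minE1 minE2 neqE.
apply: core (capvSl _ _) => z y /memv_capP[yM yE1].
have /memv_addP[m mM [e eE2 ->]] : z \in (M + E2)%VS.
  by rewrite (max_core_suppl minE2 maxM coreM) memvf.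
rewrite brDl; apply: memvD; first by rewrite memv_cap sM ?idE1.
have eyN : br e y \in N by rewrite -capE memv_cap idE1 // ideal_brl.
by rewrite memv_cap (subvP sNM) ?(subvP sNE1).
Qed.

Lemma max_core_centv : (centv E1 N <= E2)%VS.
Proof.
have [idE1 sNE1 _ _] := minE1; have [idE2 sNE2 _ _] := minE2.
have [sM _ _] := maxM; have [idN sNM core] := coreM.
have capE := minimal_over_cap minE1 minE2 neqE.
have sE2C : (E2 <= centv E1 N)%VS by rewrite -capE centv_cap.
have idMC : is_ideal br (M :&: centv E1 N).
  move=> z y /memv_capP[yM /memv_centv yC].
  have /memv_addP[m mM [e eE1 ->]] : z \in (M + E1)%VS.
    by rewrite (max_core_suppl minE1 maxM coreM) memvf.
  have eyN : br e y \in N by rewrite br_anti memvN yC.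
  rewrite brDl; apply: memvD; last first.
    by rewrite memv_cap (subvP sNM) ?(subvP (centv_ideal _ idN)).
  rewrite memv_cap sM //; apply/memv_centv => a aE1.
  by rewrite br_jacobi; apply: memvD; [apply: idN | ]; apply: yC; last exact: ideal_brl.
have sMCN := core _ idMC (capvSl _ _).
apply/subvP => x xC.
have /memv_addP[m mM [e eE2 def_x]] : x \in (M + E2)%VS.
  by rewrite (max_core_suppl minE2 maxM coreM) memvf.
have mC : m \in centv E1 N by rewrite -[m](addrK e) -def_x memvB // (subvP sE2C).
by rewrite def_x memvD // (subvP sNE2) // (subvP sMCN) // memv_cap mM.
Qed.

End MaximalSubalgebraWithTrivialCore.

(* A primitive quotient L/N of type 3 with minimal ideals E1/N and E2/N,
   witnessed by a maximal subalgebra M/N with trivial core. *)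
Record type3_frame (N E1 E2 M : {vspace L}) : Prop := Type3Frame {
  t3_min1 : minimal_over br N E1;
  t3_min2 : minimal_over br N E2;
  t3_cap : (E1 :&: E2)%VS = N;
  t3_subalg : is_subalg br M;
  t3_sub : (N <= M)%VS;
  t3_suppl1 : (M + E1)%VS = fullv;
  t3_suppl2 : (M + E2)%VS = fullv;
  t3_capM1 : (M :&: E1 <= N)%VS;
  t3_capM2 : (M :&: E2 <= N)%VS;
  t3_cent1 : centv E1 N = E2;
  t3_cent2 : centv E2 N = E1 }.

Lemma type3_frame_sym (N E1 E2 M : {vspace L}) :
  type3_frame N E1 E2 M -> type3_frame N E2 E1 M.
Proof. by case=> *; split; rewrite // capvC. Qed.

Lemma type3_frame_ideal (N E1 E2 M : {vspace L}) :
  type3_frame N E1 E2 M -> is_ideal br N.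
Proof. by case=> [[idE1 _ _ _] [idE2 _ _ _] <- *]; apply: is_ideal_cap. Qed.

Lemma primitive_type3_frame (N E1 E2 : {vspace L}) :
  primitive_type3 br N E1 E2 -> exists M, type3_frame N E1 E2 M.
Proof.
case=> [[_ [M [maxM sNM coreM]] neqE [minE1 minE2] _] _].
have neqE' : E2 != E1 by rewrite eq_sym.
have capE := minimal_over_cap minE1 minE2 neqE.
have [[idE1 _ _ _] [idE2 _ _ _]] := (minE1, minE2).
exists M; split=> //.
- by case: maxM.
- exact: max_core_suppl maxM coreM.
- exact: max_core_suppl maxM coreM.
- exact: max_core_capM minE1 minE2 neqE maxM coreM.
- exact: max_core_capM minE2 minE1 neqE' maxM coreM.
- apply/eqP; rewrite eqEsubv (max_core_centv minE1 minE2 neqE maxM coreM) /=.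
  by rewrite -{1}capE centv_cap.
apply/eqP; rewrite eqEsubv (max_core_centv minE2 minE1 neqE' maxM coreM) /=.
by rewrite -{1}capE capvC centv_cap.
Qed.

Section Type3Frame.
Variables N E1 E2 M : {vspace L}.
Hypothesis fr : type3_frame N E1 E2 M.

Lemma type3_frame_neq : E1 != E2.
Proof.
have [[_ _ neqE1 _] _ capE _ _ _ _ _ _ _ _] := fr.
by apply: contraNneq neqE1 => eqE; rewrite -capE eqE capvv.
Qed.

Lemma type3_frame_nonabelian : nonabelian_over br N E1.
Proof.
have [[_ _ neqE1 _] _ capE _ _ _ _ _ _ cent1 _] := fr.
apply: nonabelian_over_centv; apply: contra neqE1; rewrite cent1 => /capv_idPl.
by rewrite capE => ->.
Qed.

Lemma type3_frame_max_subalg : max_subalg br M.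
Proof.
have [[idE1 sNE1 neqE1 minE1] [idE2 _ _ _] capE sM sNM suppl1 suppl2 capM1 _ _ _] := fr.
split=> // [|S sS sMS].
  apply: contraNneq neqE1 => eqM; rewrite eqEsubv sNE1 andbT.
  by rewrite eqM capfv in capM1.
have idSE1 : is_ideal br (S :&: E1).
  move=> z y /memv_capP[yS yE1].
  have /memv_addP[m mM [e eE2 ->]] : z \in (M + E2)%VS by rewrite suppl2 memvf.
  have eyN : br e y \in N by rewrite -capE memv_cap idE1 // (ideal_brl _ idE2).
  rewrite memv_cap idE1 // brDl andbT; apply: memvD; first by apply: sS => //; apply: (subvP sMS).
  exact: subvP (subv_trans sNM sMS) _ eyN.
have sNSE1 : (N <= S :&: E1)%VS by rewrite subv_cap sNE1 (subv_trans sNM).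
case: (minE1 _ idSE1 sNSE1 (capvSr _ _)) => SE1; [left | right].
  have -> : S = (S :&: (M + E1))%VS by rewrite suppl1 capvf.
  by rewrite capv_addl_modular // SE1; apply/addv_idPl.
by apply/eqP; rewrite eqEsubv subvf -suppl1 subv_add sMS -SE1 capvSl.
Qed.

Lemma type3_frame_core : is_core br M N.
Proof.
have [[idE1 _ _ _] _ _ _ sNM _ _ capM1 capM2 cent1 _] := fr.
split=> // [|I idI sIM]; first exact: type3_frame_ideal fr.
apply: subv_trans capM2; rewrite subv_cap sIM -cent1.
apply/subvP => x xI; apply/memv_centv => a aE1.
by rewrite (subvP capM1) // memv_cap idE1 // (subvP sIM) // ideal_brl.
Qed.

Lemma type3_frame_minimal (E : {vspace L}) : minimal_over br N E -> E = E1 \/ E = E2.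
Proof.
have [minE1 minE2 _ _ _ _ _ _ _ cent1 _] := fr.
move=> minE; have [idE sNE neqE _] := minE.
have [-> | neqE1] := eqVneq E E1; first by left.
have [-> | neqE2] := eqVneq E E2; first by right.
have capE1 := minimal_over_cap minE minE1 neqE1.
have capE2 := minimal_over_cap minE minE2 neqE2.
case/negP: neqE; rewrite eqEsubv sNE andbT -capE2 subv_cap subvv -cent1 /=.
by rewrite -capE1 capvC centv_cap //; case: minE1.
Qed.

End Type3Frame.

Lemma type3_frame_primitive (N E1 E2 M : {vspace L}) :
  type3_frame N E1 E2 M -> primitive_type3 br N E1 E2.
Proof.
move=> fr; have [minE1 minE2 _ _ sNM _ _ _ _ _ _] := fr.
split; split=> //.
- exact: type3_frame_ideal fr.
- by exists M; split; [exact: type3_frame_max_subalg fr | | exact: type3_frame_core fr].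
- exact: type3_frame_neq fr.
- exact: type3_frame_minimal fr.
- exact: type3_frame_nonabelian fr.
exact: type3_frame_nonabelian (type3_frame_sym fr).
Qed.

Section Glue.
Variables N N' E C C' M M' : {vspace L}.
Hypotheses (fr : type3_frame N E C M) (fr' : type3_frame N' E C' M') (neqN : N != N').

Lemma glue_addv : (N + N')%VS = E.
Proof.
exact: minimal_over_addv (type3_frame_ideal fr) (type3_frame_ideal fr')
  (t3_min1 fr) (t3_min1 fr') neqN.
Qed.

Lemma glue_sub_add : (C <= N + C')%VS.
Proof.
have [[_ sNE _ _] [idC sNC neqC minC] capEC _ _ _ _ _ _ _ _] := fr.
have [_ [idC' _ _ _] capEC' _ _ _ _ _ _ _ centC'] := fr'.
pose J := (C :&: (N + C'))%VS.
have idJ : is_ideal br J.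
  by apply: is_ideal_cap (is_ideal_add (type3_frame_ideal fr) idC').
have sNJ : (N <= J)%VS by rewrite subv_cap sNC addvSl.
case: (minC J idJ sNJ (capvSl _ _)) => [JN | JC]; last by rewrite -JC capvSr.
(* Were J = N, C would centralise C' modulo N', hence lie in E, hence in N. *)
case/negP: neqC; rewrite eqEsubv sNC andbT -capEC subv_cap subvv andbT -centC'.
apply/subvP => x xC; apply/memv_centv => a aC'.
have xaJ : br x a \in J by rewrite memv_cap (ideal_brl _ idC xC) (subvP (addvSr _ _)) // idC'.
by rewrite -capEC' memv_cap idC' // andbT (subvP sNE) // -JN.
Qed.

Lemma glue_iso : L_iso br C (C :&: C') E N'.
Proof.
have [[_ sNE _ _] [idC sNC _ _] _ _ _ _ _ _ _ _ _] := fr.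
have [_ [idC' sN'C' _ _] capEC' _ _ _ _ _ _ _ _] := fr'.
have sCN : (C <= (C :&: C') + N)%VS.
  by rewrite addvC -capv_addl_modular // (capv_idPl glue_sub_add).
have capN : (C :&: C' :&: N)%VS = (N' :&: N)%VS.
  apply/vspaceP => y; rewrite !memv_cap; apply/idP/idP.
    by case/andP => /andP[yC yC'] yN; rewrite yN andbT -capEC' memv_cap yC' (subvP sNE).
  by case/andP => yN' yN; rewrite yN (subvP sNC) // (subvP sN'C').
have idN := type3_frame_ideal fr.
apply: L_iso_trans (L_iso_sym idN idC (is_ideal_cap idC idC') (L_iso_second sNC sCN)) _.
by rewrite capN; apply: L_iso_second sNE _; rewrite addvC glue_addv.
Qed.

Lemma glue_minimal : minimal_over br (C :&: C') C.
Proof.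
have [[idE _ _ _] [idC _ _ _] _ _ _ _ _ _ _ _ _] := fr.
have idN' := type3_frame_ideal fr'.
exact: L_iso_minimal_over idC (capvSl _ _) (L_iso_sym idC idE idN' glue_iso) (t3_min1 fr').
Qed.

Lemma glue_centv : centv C (C :&: C') = C'.
Proof.
have [_ [idC _ _ _] _ _ _ _ _ _ _ _ _] := fr.
by rewrite (L_iso_centv idC (type3_frame_ideal fr') glue_iso) (t3_cent1 fr').
Qed.

Lemma glue_suppl : ((M :&: M') + (C :&: C') + C)%VS = fullv.
Proof.
have [_ [_ sNC _ _] _ _ sNM _ suppl _ _ _ _] := fr.
have [_ _ _ _ sN'M' supplE' _ _ _ _ _] := fr'.
have sMN : (M <= N + M :&: M')%VS.
  rewrite -capv_addl_modular // subv_cap subvv /=; apply: subv_trans (subvf M) _.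
  by rewrite -supplE' -glue_addv subv_add addvSr addvS.
apply/eqP; rewrite eqEsubv subvf /= -suppl subv_add addvSr andbT.
apply: subv_trans sMN _; rewrite subv_add (subv_trans sNC (addvSr _ _)) /=.
exact: subv_trans (addvSl _ _) (addvSl _ _).
Qed.

Lemma glue_capM : (((M :&: M') + (C :&: C')) :&: C <= C :&: C')%VS.
Proof.
have [[_ sNE _ _] _ _ _ _ _ _ _ capMC _ _] := fr.
have [_ [_ sN'C' _ _] _ _ _ _ _ capME' _ _ _] := fr'.
rewrite capvC addvC capv_addl_modular ?capvSl // subv_add subvv /=.
apply/subvP => y /memv_capP[yC /memv_capP[yM yM']].
have yN : y \in N by apply: (subvP capMC); rewrite memv_cap yM.
have yN' : y \in N' by apply: (subvP capME'); rewrite memv_cap yM' (subvP sNE).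
by rewrite memv_cap yC (subvP sN'C').
Qed.

End Glue.

Lemma glue_frame (N N' E C C' M M' : {vspace L}) :
  type3_frame N E C M -> type3_frame N' E C' M' -> N != N' ->
  type3_frame (C :&: C') C C' ((M :&: M') + (C :&: C')).
Proof.
move=> fr fr' neqN; have neqN' : N' != N by rewrite eq_sym.
have [_ [idC _ _ _] _ sM _ _ _ _ _ _ _] := fr.
have [_ [idC' _ _ _] _ sM' _ _ _ _ _ _ _] := fr'.
split.
- exact: glue_minimal fr fr' neqN.
- by rewrite capvC; exact: glue_minimal fr' fr neqN'.
- by [].
- exact: is_subalg_add_ideal (is_subalg_cap sM sM') (is_ideal_cap idC idC').
- exact: addvSr.
- exact: glue_suppl fr fr' neqN.
- by rewrite (capvC M) (capvC C); exact: glue_suppl fr' fr neqN'.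
- exact: glue_capM fr fr'.
- by rewrite (capvC M) (capvC C); exact: glue_capM fr' fr.
- exact: glue_centv fr fr' neqN.
by rewrite (capvC C); exact: glue_centv fr' fr neqN'.
Qed.

Lemma primitive_type3_sym (N E1 E2 : {vspace L}) :
  primitive_type3 br N E1 E2 -> primitive_type3 br N E2 E1.
Proof. by case/primitive_type3_frame=> M /type3_frame_sym/type3_frame_primitive. Qed.

Lemma L_connected_sym (A1 B1 A2 B2 : {vspace L}) :
  is_ideal br A1 -> is_ideal br A2 -> is_ideal br B2 ->
  L_connected br A1 B1 A2 B2 -> L_connected br A2 B2 A1 B1.
Proof.
move=> idA1 idA2 idB2 [iso | [N [E1 [E2 [prim iso1 iso2]]]]].
  by left; apply: L_iso_sym.
by right; exists N, E2, E1; split=> //; apply: primitive_type3_sym.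
Qed.

Lemma primitive_type3_connected_trans (A1 B1 A2 B2 A3 B3 N E1 E2 N' E1' E2' : {vspace L}) :
  is_ideal br A1 -> is_ideal br B1 -> is_ideal br A2 -> is_ideal br B2 ->
  primitive_type3 br N E1 E2 -> L_iso br E1 N A1 B1 -> L_iso br E2 N A2 B2 ->
  primitive_type3 br N' E1' E2' -> L_iso br E1' N' A2 B2 -> L_iso br E2' N' A3 B3 ->
  L_connected br A1 B1 A3 B3.
Proof.
move=> idA1 idB1 idA2 idB2 /primitive_type3_frame[M fr] iso1 iso2.
move=> /primitive_type3_frame[M' fr'] iso1' iso2'.
have [[idE1 _ _ _] [idE2 _ _ _] _ _ _ _ _ _ _ _ cent2] := fr.
have [[idE1' _ _ _] _ _ _ _ _ _ _ _ cent1' _] := fr'.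
have iso22 : L_iso br E2 N E1' N' := L_iso_trans iso2 (L_iso_sym idE1' idA2 idB2 iso1').
have eqE : E2' = E1.
  by rewrite -cent1' -(L_iso_centv idE2 (type3_frame_ideal fr') iso22) cent2.
clear cent1'; subst E2'; have [eqN | neqN] := eqVneq N N'.
  by left; subst N'; exact: L_iso_trans (L_iso_sym idE1 idA1 idB1 iso1) iso2'.
have neqN' : N' != N by rewrite eq_sym.
have fr'' := type3_frame_sym fr'.
right; exists (E1' :&: E2)%VS, E1', E2; split.
- exact: type3_frame_primitive (glue_frame fr'' fr neqN').
- exact: L_iso_trans (glue_iso fr'' fr neqN') iso1.
by rewrite capvC; exact: L_iso_trans (glue_iso fr fr'' neqN) iso2'.
Qed.

Lemma L_connected_trans (A1 B1 A2 B2 A3 B3 : {vspace L}) :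
  is_ideal br A1 -> is_ideal br B1 -> is_ideal br A2 -> is_ideal br B2 ->
  L_connected br A1 B1 A2 B2 -> L_connected br A2 B2 A3 B3 -> L_connected br A1 B1 A3 B3.
Proof.
move=> idA1 idB1 idA2 idB2 [iso12 | [N [E1 [E2 [prim iso1 iso2]]]]].
  case=> [iso23 | [N' [E1' [E2' [prim' iso1' iso2']]]]].
    by left; apply: L_iso_trans iso12 iso23.
  right; exists N', E1', E2'; split=> //.
  exact: L_iso_trans iso1' (L_iso_sym idA1 idA2 idB2 iso12).
case=> [iso23 | [N' [E1' [E2' [prim' iso1' iso2']]]]].
  by right; exists N, E1, E2; split=> //; apply: L_iso_trans iso2 iso23.
exact: primitive_type3_connected_trans prim iso1 iso2 prim' iso1' iso2'.
Qed.

End LieAlgebra.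

Theorem theorem2p5 (F : fieldType) (L : vectType F) (br : L -> L -> L)
  (hL : lie_bracket br) :
  [/\ (forall A B, chief_factor br A B -> L_connected br A B A B),
      (forall A1 B1 A2 B2, chief_factor br A1 B1 -> chief_factor br A2 B2 ->
         L_connected br A1 B1 A2 B2 -> L_connected br A2 B2 A1 B1) &
      (forall A1 B1 A2 B2 A3 B3, chief_factor br A1 B1 ->
         chief_factor br A2 B2 -> chief_factor br A3 B3 ->
         L_connected br A1 B1 A2 B2 -> L_connected br A2 B2 A3 B3 ->
         L_connected br A1 B1 A3 B3)].
Proof.
split=> [A B _ | A1 B1 A2 B2 [idA1 _ _ _ _] [idA2 idB2 _ _ _] |].
- by left; apply: L_iso_refl.
- exact: L_connected_sym.
move=> A1 B1 A2 B2 A3 B3 [idA1 idB1 _ _ _] [idA2 idB2 _ _ _] _.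
exact: L_connected_trans.
Qed.
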